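(* Let $G$ and $H$ be graphs such that the strong product $G\boxtimes H$ is $1$-perfectly orientable. Then: (1) if one of $G$, $H$ contains an induced $P_3$, then the other one contains none of $P_5$, $C_4$, $C_5$, the claw, the bull as an induced subgraph; (2) at least one of $G$ and $H$ contains no induced $P_4$.
   Context: All graphs are finite and simple. An orientation of a graph $G$ is $1$-perfect if the out-neighborhood of every vertex induces a clique in $G$; $G$ is $1$-perfectly orientable if it admits a $1$-perfect orientation. The strong product $G\boxtimes H$ has vertex set $V(G)\times V(H)$, with distinct $(u,v),(u',v')$ adjacent iff $u'\in N_G[u]$ and $v'\in N_H[v]$, where $N[\cdot]$ denotes the closed neighborhood. $P_n$, $C_n$ denote the path and cycle on $n$ vertices; the claw is $K_{1,3}$; the bull is the $5$-vertex graph consisting of a triangle with two pendant edges attached at two distinct triangle vertices. *)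

From mathcomp Require Import all_boot.
Set Implicit Arguments. Unset Strict Implicit. Unset Printing Implicit Defensive.

Definition simple_graph (V : finType) (e : rel V) : Prop :=
  symmetric e /\ irreflexive e.

Definition is_orientation (V : finType) (e o : rel V) : Prop :=
  (forall x y, o x y -> e x y) /\
  (forall x y, e x y -> o x y || o y x) /\
  (forall x y, o x y -> ~~ o y x).

Definition one_perfect (V : finType) (e o : rel V) : Prop :=
  forall v x y, o v x -> o v y -> x != y -> e x y.

Definition one_perfectly_orientable (V : finType) (e : rel V) : Prop :=
  exists o : rel V, is_orientation e o /\ one_perfect e o.

Definition strong_prod (V W : finType) (g : rel V) (h : rel W) : rel (V * W) :=
  fun p q => (p != q) && ((p.1 == q.1) || g p.1 q.1) && ((p.2 == q.2) || h p.2 q.2).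

Definition has_induced (T V : finType) (p : rel T) (e : rel V) : Prop :=
  exists f : T -> V, injective f /\ forall x y, e (f x) (f y) = p x y.

Definition path_graph (n : nat) : rel 'I_n :=
  fun i j => (i.+1 == j :> nat) || (j.+1 == i :> nat).

Arguments path_graph n : clear implicits.

(* Cycle C_n on 'I_n (used for n >= 3). *)
Definition cycle_graph (n : nat) : rel 'I_n :=
  fun i j => [|| (i.+1 == j :> nat), (j.+1 == i :> nat),
                 ((i == 0 :> nat) && (j == n.-1 :> nat))
               | ((j == 0 :> nat) && (i == n.-1 :> nat))].

Arguments cycle_graph n : clear implicits.

Definition claw : rel 'I_4 :=
  fun i j => ((i == 0 :> nat) && (j != 0 :> nat)) || ((j == 0 :> nat) && (i != 0 :> nat)).

Definition bull_edge (a b : nat) : bool :=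
  [|| (a == 0) && (b == 1), (a == 0) && (b == 2), (a == 1) && (b == 2),
      (a == 0) && (b == 3) | (a == 1) && (b == 4)].
Definition bull : rel 'I_5 :=
  fun i j => bull_edge i j || bull_edge j i.

Definition forbidden_family (V : finType) (e : rel V) : Prop :=
  ~ has_induced (path_graph 5) e /\ ~ has_induced (cycle_graph 4) e /\
  ~ has_induced (cycle_graph 5) e /\ ~ has_induced claw e /\
  ~ has_induced bull e.

(* In a 1-perfect orientation, an arc x -> y together with a neighbour z of x
   that is neither y nor adjacent to y forces the arc z -> x, since x cannot
   have the two non-adjacent out-neighbours y and z.  A graph in which some
   edge forces, through a chain of such steps, its own reversal in both
   directions is therefore not 1-perfectly orientable.  A finite search finds
   such an edge in P3 ⊠ P5, P3 ⊠ C4, P3 ⊠ C5, P3 ⊠ claw, P3 ⊠ bull and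
   P4 ⊠ P4.  Since 1-perfect orientability passes to induced subgraphs and the
   strong product of induced subgraphs is an induced subgraph of the strong
   product, none of these six products can occur inside G ⊠ H. *)

From mathcomp Require Import all_boot.
From Stdlib Require Import Classical.
Set Implicit Arguments. Unset Strict Implicit. Unset Printing Implicit Defensive.

Lemma one_perfectly_orientable_induced (T V : finType) (p : rel T) (e : rel V) :
  has_induced p e -> one_perfectly_orientable e -> one_perfectly_orientable p.
Proof.
move=> [f [inj_f ef]] [o [[oe [eo anti]] o1]].
exists (fun x y => o (f x) (f y)); split; first split.
- by move=> x y /oe; rewrite ef.
- by split=> [x y | x y /anti //]; rewrite -ef => /eo.
- by move=> v x y ovx ovy neq_xy; rewrite -ef (o1 (f v)) ?(inj_eq inj_f).
Qed.

Lemma has_induced_strong_prod (T U V W : finType)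
    (p : rel T) (q : rel U) (g : rel V) (h : rel W) :
  has_induced p g -> has_induced q h ->
  has_induced (strong_prod p q) (strong_prod g h).
Proof.
move=> [f [inj_f gf]] [k [inj_k hk]].
have inj_fk : injective (fun a : T * U => (f a.1, k a.2)).
  by move=> [a1 a2] [b1 b2] [/inj_f -> /inj_k ->].
exists (fun a => (f a.1, k a.2)); split=> // a b.
by rewrite /strong_prod /= (inj_eq inj_fk) (inj_eq inj_f) (inj_eq inj_k) gf hk.
Qed.

Lemma has_induced_strong_prodC (V W : finType) (g : rel V) (h : rel W) :
  has_induced (strong_prod h g) (strong_prod g h).
Proof.
exists (fun a : W * V => (a.2, a.1)).
split=> [[? ?] [? ?] [-> ->] // | [a1 a2] [b1 b2]].
by rewrite /strong_prod /= !xpair_eqE -!andbA [(a2 == b2) && _]andbC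
  [((a2 == b2) || _) && _]andbC.
Qed.

Section Forcing.
Variables (T : finType) (e : rel T).

Definition forces (a b : T * T) : bool :=
  [&& b.2 == a.1, e a.1 b.1, ~~ e a.2 b.1 & a.2 != b.1].

Variable vs : seq T.

Definition forced_arcs (a : T * T) : seq (T * T) :=
  [seq (z, a.1) | z <- vs & forces a (z, a.1)].

(* Breadth-first search for b from the arcs in frontier; [fuel], [seen] and
   [vs] only bound and prune the search, soundness does not depend on them. *)
Fixpoint forcing_reaches (fuel : nat) (b : T * T) (seen frontier : seq (T * T))
    : bool :=
  if fuel is k.+1 then
    let fresh := undup [seq c <- flatten (map forced_arcs frontier) | c \notin seen] in
    if b \in fresh then true
    else if fresh is [::] then false
    else forcing_reaches k b (fresh ++ seen) fresh
  else false.

Definition forcing_obstruction : bool :=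
  has (fun a => [&& e a.1 a.2,
                   forcing_reaches (size vs ^ 2) (a.2, a.1) [:: a] [:: a]
                 & forcing_reaches (size vs ^ 2) a [:: (a.2, a.1)] [:: (a.2, a.1)]])
      [seq (x, y) | x <- vs, y <- vs].

Section Oriented.
Variable o : rel T.
Hypotheses (o_orient : is_orientation e o) (o_1perfect : one_perfect e o).

Lemma forces_oriented a b : forces a b -> o a.1 a.2 -> o b.1 b.2.
Proof.
have [_ [eo _]] := o_orient.
case/and4P=> /eqP b2 e_ab /negbTE ne_ab neq_ab oa.
case/orP: (eo _ _ e_ab) => [oab | ]; last by rewrite b2.
by have := o_1perfect oa oab neq_ab; rewrite ne_ab.
Qed.

Lemma forcing_reaches_oriented k b seen frontier :
  {in frontier, forall c, o c.1 c.2} ->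
  forcing_reaches k b seen frontier -> o b.1 b.2.
Proof.
elim: k seen frontier => [|k IHk] //= seen frontier o_frontier.
set fresh := undup _.
have o_fresh : {in fresh, forall c, o c.1 c.2}.
  move=> c; rewrite mem_undup mem_filter => /andP[_ /flatten_mapP[a fa]].
  case/mapP=> z; rewrite mem_filter => /andP[f_az _] ->.
  exact/(forces_oriented f_az)/o_frontier.
case: ifP => [/o_fresh // | _]; case: fresh o_fresh => // c cs o_fresh.
exact: IHk.
Qed.

End Oriented.

Lemma forcing_obstruction_not_one_perfectly_orientable :
  forcing_obstruction -> ~ one_perfectly_orientable e.
Proof.
case/hasP=> a _ /and3P[e_a reach_rev reach] [o [o_orient o_1perfect]].
have [_ [eo anti]] := o_orient.
have reaches_oriented := forcing_reaches_oriented o_orient o_1perfect.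
have o_single c : o c.1 c.2 -> {in [:: c], forall d, o d.1 d.2}.
  by move=> oc d; rewrite inE => /eqP ->.
case/orP: (eo _ _ e_a) => oa.
  have := reaches_oriented _ _ _ _ (o_single a oa) reach_rev.
  by rewrite (negbTE (anti _ _ oa)).
have := reaches_oriented _ _ _ _ (o_single (a.2, a.1) oa) reach.
by rewrite (negbTE (anti _ _ oa)).
Qed.

End Forcing.

(* [enum 'I_n] is locked and [ord_enum] goes through [insub]; neither reduces
   under [vm_compute], unlike this enumeration. *)
Fixpoint ord_seq n : seq 'I_n :=
  if n is n'.+1 then ord0 :: map (lift ord0) (ord_seq n') else [::].

Definition ord_pairs m n : seq ('I_m * 'I_n) :=
  [seq (i, j) | i <- ord_seq m, j <- ord_seq n].

(* [has_find]: [vm_compute] evaluates both arguments of [orb], whereas [find]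
   stops at the first witness. *)
Ltac forcing_search m n :=
  apply: (@forcing_obstruction_not_one_perfectly_orientable _ _ (ord_pairs m n));
  rewrite /forcing_obstruction has_find; vm_compute; reflexivity.

Lemma not_one_perfectly_orientable_P3_P5 :
  ~ one_perfectly_orientable (strong_prod (path_graph 3) (path_graph 5)).
Proof. forcing_search 3 5. Qed.

Lemma not_one_perfectly_orientable_P3_C4 :
  ~ one_perfectly_orientable (strong_prod (path_graph 3) (cycle_graph 4)).
Proof. forcing_search 3 4. Qed.

Lemma not_one_perfectly_orientable_P3_C5 :
  ~ one_perfectly_orientable (strong_prod (path_graph 3) (cycle_graph 5)).
Proof. forcing_search 3 5. Qed.

Lemma not_one_perfectly_orientable_P3_claw :
  ~ one_perfectly_orientable (strong_prod (path_graph 3) claw).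
Proof. forcing_search 3 4. Qed.

Lemma not_one_perfectly_orientable_P3_bull :
  ~ one_perfectly_orientable (strong_prod (path_graph 3) bull).
Proof. forcing_search 3 5. Qed.

Lemma not_one_perfectly_orientable_P4_P4 :
  ~ one_perfectly_orientable (strong_prod (path_graph 4) (path_graph 4)).
Proof. forcing_search 4 4. Qed.

Lemma forbidden_family_of_induced_P3 (V W : finType) (g : rel V) (h : rel W) :
  one_perfectly_orientable (strong_prod g h) ->
  has_induced (path_graph 3) g -> forbidden_family h.
Proof.
move=> po P3g.
have po_P3 (T : finType) (q : rel T) :
    has_induced q h -> one_perfectly_orientable (strong_prod (path_graph 3) q).
  move=> qh; exact: one_perfectly_orientable_induced (has_induced_strong_prod _ qh) po.
split; [|split; [|split; [|split]]] => /po_P3.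
- exact: not_one_perfectly_orientable_P3_P5.
- exact: not_one_perfectly_orientable_P3_C4.
- exact: not_one_perfectly_orientable_P3_C5.
- exact: not_one_perfectly_orientable_P3_claw.
- exact: not_one_perfectly_orientable_P3_bull.
Qed.

Theorem lemma14 (V W : finType) (g : rel V) (h : rel W)
  (Hg : simple_graph g) (Hh : simple_graph h)
  (Hpo : one_perfectly_orientable (strong_prod g h)) :
  ((has_induced (path_graph 3) g -> forbidden_family h) /\
   (has_induced (path_graph 3) h -> forbidden_family g)) /\
  (~ has_induced (path_graph 4) g \/ ~ has_induced (path_graph 4) h).
Proof.
have Hpo_swap : one_perfectly_orientable (strong_prod h g).
  exact: one_perfectly_orientable_induced (has_induced_strong_prodC g h) Hpo.
split; first split; first exact: forbidden_family_of_induced_P3.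
  exact: forbidden_family_of_induced_P3.
have [P4g | ] := classic (has_induced (path_graph 4) g); last by left.
right=> P4h; apply: not_one_perfectly_orientable_P4_P4.
exact: one_perfectly_orientable_induced (has_induced_strong_prod P4g P4h) Hpo.
Qed.
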